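(* Let $\Sigma$ be a connected orientable compact surface with $n$ boundary components $\{1,\dots,n\}$, $T$ an ideal triangulation with edges $E$ and faces $F$, and $l^0\in\mathbb{R}_{>0}^{|E|}$ a hyperbolic metric on $(\Sigma,T)$. Consider the combinatorial Yamabe flow $$\frac{dw_i(t)}{dt}=B_i(t),\qquad w_i(0)=0,\qquad i=1,\dots,n,$$ where $B_i(t)$ is the length of boundary component $i$ of the hyperbolic metric determined by $w(t)$ via $\cosh\frac{l_{ij}}{2}=e^{w_i+w_j}\cosh\frac{l^0_{ij}}{2}$. Then this flow is the gradient flow of a concave function of $w$ (defined on the set $\mathcal{W}$ of $w$ for which all $l_{ij}>0$), and $\sum_{i=1}^n B_i(t)^2$ is decreasing in $t$.
   Context: An ideal triangulation: glue finitely many hexagons, each with three pairwise non-adjacent sides colored red, along red sides in pairs; faces are the images of hexagons, edges the images of red sides, boundary arcs the images of the other sides. Each edge joins boundary components $i,j$ and is denoted $ij$; each face meets boundary components $i,j,k$ and is denoted $ijk$. A hyperbolic metric is a vector $l\in\mathbb{R}_{>0}^{|E|}$; each face $ijk$ is realized as the unique hyperbolic right-angled hexagon with pairwise non-adjacent sides of lengths $l_{jk},l_{ki},l_{ij}$, and $\theta^i_{jk}$ is the length of the side on boundary component $i$ (opposite to $jk$). Then $B_i=\sum_{ijk\in F}\theta^i_{jk}$. *)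

From mathcomp Require Import all_boot.
From Stdlib Require Import Reals.
From Coquelicot Require Import Coquelicot.

Set Implicit Arguments.
Unset Strict Implicit.
Unset Printing Implicit Defensive.

(* Faces are hexagons, indexed by a finite type F.  A red side of a    *)
(* hexagon is a "dart" (f,k), k : 'I_3.  The boundary arc number k of  *)
(* face f is the one opposite to red side k; it lies between red sides *)
(* k+1 and k+2 (indices mod 3), so red side k has its endpoints on the *)
(* arcs k+1 and k+2.  The gluing is a fixed-point-free involution      *)
(* [glue] on darts; red sides are glued orientation-reversingly (with  *)
(* the cyclic orientation red k, arc k+2, red k+1, arc k, ... of every *)
(* hexagon), so the resulting surface is orientable.                   *)
(* [bd f k : 'I_n] is the boundary component containing arc k of f.   *)

Definition dart (F : finType) := (F * 'I_3)%type.

Definition succ3 (k : 'I_3) : 'I_3 := ordS k.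

(* arc x and arc y are glued at an endpoint (one direction) *)
Definition arc_rel (F : finType) (glue : dart F -> dart F) : rel (dart F) :=
  fun x y => [exists d : dart F,
    (x == (d.1, succ3 d.2)) && (y == ((glue d).1, succ3 (succ3 (glue d).2)))].

Definition arc_adj (F : finType) (glue : dart F -> dart F) : rel (dart F) :=
  fun x y => arc_rel glue x y || arc_rel glue y x.

Definition face_adj (F : finType) (glue : dart F -> dart F) : rel F :=
  fun f g => [exists k : 'I_3, (glue (f, k)).1 == g].

Definition ideal_triangulation (n : nat) (F : finType)
    (glue : dart F -> dart F) (bd : F -> 'I_3 -> 'I_n) : Prop :=
  (forall d, glue (glue d) = d) /\
  (forall d, glue d <> d) /\
  [/\ 
      (forall f g : F, connect (face_adj glue) f g),
      (* bd is constant along boundary components ... *)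
      (forall x y : dart F, arc_adj glue x y -> bd x.1 x.2 = bd y.1 y.2),
      (* ... separates distinct boundary components ... *)
      (forall x y : dart F, bd x.1 x.2 = bd y.1 y.2 -> connect (arc_adj glue) x y)
    & (* ... and every label is used: there are exactly n components *)
      (forall i : 'I_n, exists x : dart F, bd x.1 x.2 = i)].

(* A hyperbolic metric: a positive length on each edge, i.e. a positive
   function on darts that is invariant under the gluing. *)
Definition hyperbolic_metric (F : finType) (glue : dart F -> dart F)
    (l : dart F -> R) : Prop :=
  (forall d, 0 < l d)%R /\ (forall d, l (glue d) = l d).

Definition acosh (x : R) : R := ln (x + sqrt (x * x - 1)).

(* Right-angled hexagon with pairwise non-adjacent sides a, b, c: the length
   of the side opposite to the side of length a. *)
Definition hex_opp (a b c : R) : R :=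
  acosh ((cosh b * cosh c + cosh a) / (sinh b * sinh c)).

Definition theta (F : finType) (l : dart F -> R) (f : F) (k : 'I_3) : R :=
  hex_opp (l (f, k)) (l (f, succ3 k)) (l (f, succ3 (succ3 k))).

Definition Blen (n : nat) (F : finType) (bd : F -> 'I_3 -> 'I_n)
    (l : dart F -> R) (i : 'I_n) : R :=
  \big[Rplus/0%R]_(x : dart F | bd x.1 x.2 == i) theta l x.1 x.2.

Definition lw (n : nat) (F : finType) (bd : F -> 'I_3 -> 'I_n)
    (l0 : dart F -> R) (w : 'I_n -> R) (d : dart F) : R :=
  let i := bd d.1 (succ3 d.2) in
  let j := bd d.1 (succ3 (succ3 d.2)) in
  (2 * acosh (exp (w i + w j) * cosh (l0 d / 2)))%R.

Definition inW (n : nat) (F : finType) (bd : F -> 'I_3 -> 'I_n)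
    (l0 : dart F -> R) (w : 'I_n -> R) : Prop :=
  forall d, (0 < lw bd l0 w d)%R.

Definition Bw (n : nat) (F : finType) (bd : F -> 'I_3 -> 'I_n)
    (l0 : dart F -> R) (w : 'I_n -> R) (i : 'I_n) : R :=
  Blen bd (lw bd l0 w) i.

Definition sumB2 (n : nat) (F : finType) (bd : F -> 'I_3 -> 'I_n)
    (l0 : dart F -> R) (w : 'I_n -> R) : R :=
  \big[Rplus/0%R]_(i : 'I_n) (Bw bd l0 w i * Bw bd l0 w i)%R.

Definition upd (n : nat) (w : 'I_n -> R) (i : 'I_n) (s : R) : 'I_n -> R :=
  fun j => if j == i then s else w j.

Definition concave_on (n : nat) (D : ('I_n -> R) -> Prop)
    (Phi : ('I_n -> R) -> R) : Prop :=
  forall x y, D x -> D y -> forall t : R, (0 <= t <= 1)%R ->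
    (t * Phi x + (1 - t) * Phi y <= Phi (fun i => t * x i + (1 - t) * y i))%R.

Definition has_gradient_on (n : nat) (D : ('I_n -> R) -> Prop)
    (Phi : ('I_n -> R) -> R) (G : ('I_n -> R) -> 'I_n -> R) : Prop :=
  forall w, D w -> forall i : 'I_n,
    is_derive (fun s : R => Phi (upd w i s)) (w i) (G w i).

(* Fix a face and write a_k for the conformal factor of the boundary component
   carrying its k-th arc.  Differentiating the cosine law of the right-angled
   hexagon and using dl/da = 2 coth (l/2) for the new edge lengths shows that the
   Jacobian d theta_k / d a_m of the face is symmetric and negative semidefinite:
   in terms of X_j = cosh l_j it is 2 / sqrt D times an explicitly nonpositive
   quadratic form, D > 0 being the hexagon's Gram quantity.  Hence
   sum_k theta_k da_k is closed, and its integral along the segment from 0 to a is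
   a potential with gradient theta, concave on the convex admissible set.  Summing
   over faces gives a concave potential with gradient B, and along the flow
   d/dt sum_i B_i^2 = 2 sum_faces B^T J B <= 0.  All the identities between
   hyperbolic functions are checked by writing cosh and sinh as rational functions
   of exp. *)

From HB Require Import structures.
From mathcomp Require Import all_boot.
From Stdlib Require Import Reals Lra Psatz FunctionalExtensionality.
From Coquelicot Require Import Coquelicot.
Local Open Scope R_scope.

Lemma Rplus_associative : associative Rplus.
Proof. by move=> x y z; ring. Qed.

HB.instance Definition _ :=
  Monoid.isComLaw.Build R 0 Rplus Rplus_associative Rplus_comm Rplus_0_l.

Section RealSums.
Variables (I : Type) (r : seq I) (P : pred I).

Lemma big_Rmult_distrl (c : R) (g : I -> R) :
  c * \big[Rplus/0]_(i <- r | P i) g i = \big[Rplus/0]_(i <- r | P i) (c * g i).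
Proof. by apply: (big_endo (Rmult c)) => [x y|]; ring. Qed.

Lemma big_Rle (g h : I -> R) : (forall i, P i -> g i <= h i) ->
  \big[Rplus/0]_(i <- r | P i) g i <= \big[Rplus/0]_(i <- r | P i) h i.
Proof. by move=> gh; apply: big_ind2 => [|*|]; [lra | apply: Rplus_le_compat | apply: gh]. Qed.

Lemma is_derive_big (g : I -> R -> R) (dg : I -> R) t :
  (forall i, P i -> is_derive (g i) t (dg i)) ->
  is_derive (fun t => \big[Rplus/0]_(i <- r | P i) g i t) t
    (\big[Rplus/0]_(i <- r | P i) dg i).
Proof.
move=> hg; elim: r => [|x s IH].
  rewrite big_nil; apply: (is_derive_ext (fun=> 0)); last exact: is_derive_const.
  by move=> z; rewrite big_nil.
rewrite big_cons; case hx: (P x).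
  apply: (is_derive_ext (fun t => g x t + \big[Rplus/0]_(i <- s | P i) g i t)).
    by move=> z; rewrite big_cons hx.
  by apply: is_derive_plus => //; apply: hg.
by apply: (is_derive_ext _ _ _ _ _ IH) => z; rewrite big_cons hx.
Qed.

End RealSums.

Definition i0 : 'I_3 := @Ordinal 3 0 isT.
Definition i1 : 'I_3 := @Ordinal 3 1 isT.
Definition i2 : 'I_3 := @Ordinal 3 2 isT.

Lemma ord3P (k : 'I_3) : k = i0 \/ k = i1 \/ k = i2.
Proof. by case: k => [[|[|[|m]]] hk] //; [left | right; left | right; right]; apply: val_inj. Qed.

Lemma succ3_i0 : succ3 i0 = i1. Proof. exact: val_inj. Qed.
Lemma succ3_i1 : succ3 i1 = i2. Proof. exact: val_inj. Qed.
Lemma succ3_i2 : succ3 i2 = i0. Proof. exact: val_inj. Qed.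

Definition succ3E := (succ3_i0, succ3_i1, succ3_i2).

Lemma succ3K3 (k : 'I_3) : succ3 (succ3 (succ3 k)) = k.
Proof. by case: (ord3P k) => [|[|]] ->; rewrite !succ3E. Qed.

Lemma succ3_neq (k : 'I_3) :
  [/\ (succ3 k == k) = false, (succ3 (succ3 k) == k) = false
    & (succ3 (succ3 k) == succ3 k) = false].
Proof. by case: (ord3P k) => [|[|]] ->. Qed.

Lemma big_ord3 (g : 'I_3 -> R) : \big[Rplus/0]_(k < 3) g k = g i0 + g i1 + g i2.
Proof.
rewrite !big_ord_recl big_ord0.
have -> : lift ord0 ord0 = i1 by apply: val_inj.
have -> : lift ord0 (lift ord0 ord0) = i2 by apply: val_inj.
have -> : ord0 = i0 by apply: val_inj.
ring.
Qed.

Lemma big_ord3_rot (g : 'I_3 -> R) k :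
  \big[Rplus/0]_(m < 3) g m = g k + g (succ3 k) + g (succ3 (succ3 k)).
Proof. by rewrite big_ord3; case: (ord3P k) => [|[|]] ->; rewrite !succ3E; ring. Qed.

Section FilterLimits.
Context {T : Type} {FF : (T -> Prop) -> Prop} {FF_filter : Filter FF}.
Implicit Types (g h : T -> R).

Lemma lim_continuous (f : R -> R) g y : continuous f y ->
  filterlim g FF (locally y) -> filterlim (fun z => f (g z)) FF (locally (f y)).
Proof. by move=> hf hg; apply: filterlim_comp hg hf. Qed.

Lemma lim_const (c : R) : filterlim (fun=> c) FF (locally c).
Proof. exact: filterlim_const. Qed.

Lemma lim_plus g h y1 y2 : filterlim g FF (locally y1) ->
  filterlim h FF (locally y2) -> filterlim (fun z => g z + h z) FF (locally (y1 + y2)).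
Proof. by move=> hg hh; apply: (filterlim_comp_2 _ _ Rplus hg hh); apply: filterlim_plus. Qed.

Lemma lim_mult g h y1 y2 : filterlim g FF (locally y1) ->
  filterlim h FF (locally y2) -> filterlim (fun z => g z * h z) FF (locally (y1 * y2)).
Proof. by move=> hg hh; apply: (filterlim_comp_2 _ _ Rmult hg hh); apply: filterlim_mult. Qed.

Lemma lim_opp g y : filterlim g FF (locally y) -> filterlim (fun z => - g z) FF (locally (- y)).
Proof.
by apply: lim_continuous; apply: (continuous_opp (fun x : R => x)); apply: continuous_id.
Qed.

Lemma lim_inv g y : y <> 0 ->
  filterlim g FF (locally y) -> filterlim (fun z => / g z) FF (locally (/ y)).
Proof. by move=> y0; apply: lim_continuous; apply: continuous_Rinv. Qed.

Lemma lim_div g h y1 y2 : y2 <> 0 -> filterlim g FF (locally y1) ->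
  filterlim h FF (locally y2) -> filterlim (fun z => g z / h z) FF (locally (y1 / y2)).
Proof. by move=> y0 hg hh; apply: lim_mult hg _; apply: lim_inv. Qed.

Lemma lim_big (I : Type) (r : seq I) (P : pred I) (g : I -> T -> R) (y : I -> R) :
  (forall i, P i -> filterlim (g i) FF (locally (y i))) ->
  filterlim (fun z => \big[Rplus/0]_(i <- r | P i) g i z) FF
    (locally (\big[Rplus/0]_(i <- r | P i) y i)).
Proof.
move=> hg; elim: r => [|x s IH].
  rewrite big_nil; eapply filterlim_ext; last exact: lim_const.
  by move=> z; rewrite big_nil.
rewrite big_cons; case hx: (P x).
  eapply filterlim_ext; last by apply: lim_plus IH; apply: hg.
  by move=> z; rewrite /= big_cons hx.
by eapply filterlim_ext; last exact: IH; move=> z; rewrite big_cons hx.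
Qed.

End FilterLimits.

Lemma lim_fst x y : filterlim (fun z : R * R => z.1) (locally (x, y)) (locally x).
Proof. exact/continuity_2d_pt_filterlim/continuity_2d_pt_id1. Qed.

Lemma lim_snd x y : filterlim (fun z : R * R => z.2) (locally (x, y)) (locally y).
Proof. exact/continuity_2d_pt_filterlim/continuity_2d_pt_id2. Qed.

Lemma mvt_is_derive (h dh : R -> R) {c1 c2 : R} : c1 <= c2 ->
  (forall s, c1 <= s <= c2 -> is_derive h s (dh s)) ->
  exists2 c, c1 <= c <= c2 & h c2 - h c1 = dh c * (c2 - c1).
Proof.
move=> c12 hd; have := MVT_gen h c1 c2 dh; rewrite Rmin_left // Rmax_right //.
case=> [s hs | s hs | c [hc e]]; last by exists c.
  by apply: hd; lra.
apply/continuity_pt_filterlim/ex_derive_continuous; exists (dh s); exact: hd.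
Qed.

Lemma derive_nonpos_le (h dh : R -> R) a b :
  (forall s, a <= s <= b -> is_derive h s (dh s)) -> (forall s, a <= s <= b -> dh s <= 0) ->
  forall c1 c2, a <= c1 -> c1 <= c2 -> c2 <= b -> h c2 <= h c1.
Proof.
move=> hd hneg c1 c2 ac1 c12 c2b.
have [c hc e] := mvt_is_derive h dh c12 (fun s hs => hd s ltac:(lra)).
by have := hneg c ltac:(lra); nra.
Qed.

Lemma concave_of_derive (g h dh : R -> R) t :
  (forall s, 0 <= s <= 1 -> is_derive g s (h s)) ->
  (forall s, 0 <= s <= 1 -> is_derive h s (dh s)) -> (forall s, 0 <= s <= 1 -> dh s <= 0) ->
  0 <= t <= 1 -> t * g 1 + (1 - t) * g 0 <= g t.
Proof.
move=> hg hh hneg t01.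
have [c1 hc1 e1] := mvt_is_derive g h (proj1 t01) (fun s hs => hg s ltac:(lra)).
have [c2 hc2 e2] := mvt_is_derive g h (proj2 t01) (fun s hs => hg s ltac:(lra)).
have h12 := derive_nonpos_le _ _ _ _ hh hneg _ _ (proj1 hc1)
  (Rle_trans _ _ _ (proj2 hc1) (proj1 hc2)) (proj2 hc2).
have : 0 <= t * (1 - t) by nra.
nra.
Qed.

Lemma locally_Rabs (y eps : R) : 0 < eps -> locally y (fun x => Rabs (x - y) < eps).
Proof. by move=> eps0; exists (mkposreal _ eps0). Qed.

Lemma derive_nonpos_le_right_cont (h dh : R -> R) b :
  (forall s, 0 < s < b -> is_derive h s (dh s)) -> (forall s, 0 < s < b -> dh s <= 0) ->
  filterlim h (at_right 0) (locally (h 0)) ->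
  forall c1 c2, 0 <= c1 -> c1 <= c2 -> c2 < b -> h c2 <= h c1.
Proof.
move=> hd hneg h0 c1 c2 c10 c12 c2b.
have le_pos c : 0 < c -> c <= c2 -> h c2 <= h c.
  move=> c0 cc2; apply: (derive_nonpos_le h dh c c2 _ _ c c2); try lra.
  - by move=> s hs; apply: hd; lra.
  - by move=> s hs; apply: hneg; lra.
case: (Rle_lt_or_eq_dec _ _ c10) => [c1pos | c1_0]; first exact: le_pos.
subst c1.
apply: Rnot_lt_le => lt20.
have c2pos : 0 < c2 by case: (Rle_lt_or_eq_dec _ _ c12) => // c2_0; subst c2; lra.
have eps0 : 0 < h c2 - h 0 by lra.
have near : at_right 0 (fun u => [/\ 0 < u, u <= c2 & Rabs (h u - h 0) < h c2 - h 0]).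
  have small : at_right 0 (fun u => 0 < u <= c2).
    by exists (mkposreal _ c2pos) => u /(Rabs_def2 _ _); rewrite /minus /plus /opp /=; lra.
  by apply: filter_imp (filter_and _ _ small (h0 _ (locally_Rabs _ _ eps0))) => u [[]].
have [u [u0 uc2 hu]] := filter_ex _ near.
by have := le_pos u u0 uc2; have := Rabs_def2 _ _ hu; lra.
Qed.

Lemma cosh_exp x : cosh x = (exp x + / exp x) / 2.
Proof. by rewrite /cosh exp_Ropp. Qed.

Lemma sinh_exp x : sinh x = (exp x - / exp x) / 2.
Proof. by rewrite /sinh exp_Ropp. Qed.

Lemma exp_gt1 x : 0 < x -> 1 < exp x.
Proof. by move=> x0; rewrite -exp_0; apply: exp_increasing. Qed.

Lemma exp_mul_gt1 u c : 0 < c -> (1 < exp u * c <-> - ln c < u).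
Proof.
move=> c0; rewrite -[X in X < exp u * c](Rinv_r c) ?(Rmult_comm (exp u)); last lra.
split=> [/(Rmult_lt_reg_l _ _ _ c0) | h].
  by rewrite -(exp_ln (/ c)); [move/exp_lt_inv; rewrite ln_Rinv | apply: Rinv_0_lt_compat].
apply: Rmult_lt_compat_l => //; rewrite -(exp_ln (/ c)); last exact: Rinv_0_lt_compat.
by apply: exp_increasing; rewrite ln_Rinv.
Qed.

Lemma cosh_gt1 x : 0 < x -> 1 < cosh x.
Proof.
move=> /exp_gt1 e1; rewrite cosh_exp.
apply: (Rmult_lt_reg_r (2 * exp x)); first lra.
by field_simplify; nra.
Qed.

Lemma cosh_pos x : 0 < cosh x.
Proof. by rewrite /cosh; have := exp_pos x; have := exp_pos (- x); lra. Qed.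

Lemma sinh_pos x : 0 < x -> 0 < sinh x.
Proof. by move=> x0; rewrite -sinh_0; apply: sinh_lt. Qed.

Lemma is_derive_cosh x : is_derive cosh x (sinh x).
Proof. exact/is_derive_Reals/derivable_pt_lim_cosh. Qed.

Lemma is_derive_sinh x : is_derive sinh x (cosh x).
Proof. exact/is_derive_Reals/derivable_pt_lim_sinh. Qed.

Lemma continuous_cosh x : continuous cosh x.
Proof. by apply: ex_derive_continuous; exists (sinh x); apply: is_derive_cosh. Qed.

Lemma continuous_sinh x : continuous sinh x.
Proof. by apply: ex_derive_continuous; exists (cosh x); apply: is_derive_sinh. Qed.

(* [y = exp (acosh x)] makes [x] and [sqrt (x^2 - 1)] rational in [y]. *)
Lemma acosh_exp {x : R} : 1 < x -> let y := exp (acosh x) in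
  [/\ 1 < y, x = (y + / y) / 2 & sqrt (x * x - 1) = (y - / y) / 2].
Proof.
move=> x1 y; have s0 : 0 < sqrt (x * x - 1) by apply: sqrt_lt_R0; nra.
have ss := sqrt_sqrt (x * x - 1) ltac:(nra).
have -> : y = x + sqrt (x * x - 1) by rewrite /y /acosh exp_ln; lra.
have -> : / (x + sqrt (x * x - 1)) = x - sqrt (x * x - 1) by field_simplify_eq; nra.
by split; lra.
Qed.

Lemma acosh_pos x : 1 < x -> 0 < acosh x.
Proof. by move=> /acosh_exp [y1 _ _]; apply: exp_lt_inv; rewrite exp_0. Qed.

Lemma acosh_pos_gt1 x : 0 < x -> 0 < acosh x -> 1 < x.
Proof.
move=> x0; case: (Rlt_le_dec 1 x) => // x1.
rewrite /acosh sqrt_neg_0 ?Rplus_0_r; last by nra.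
by have := ln_le _ _ x0 x1; rewrite ln_1; lra.
Qed.

Lemma is_derive_acosh x : 1 < x -> is_derive acosh x (/ sqrt (x * x - 1)).
Proof.
move=> x1; have s0 : 0 < sqrt (x * x - 1) by apply: sqrt_lt_R0; nra.
rewrite /acosh; auto_derive; change (x * x + - (1)) with (x * x - 1).
  by split; [nra | split; [lra | done]].
by field; lra.
Qed.

Lemma continuous_acosh x : 1 < x -> continuous acosh x.
Proof.
by move=> x1; apply: ex_derive_continuous; exists (/ sqrt (x * x - 1)); apply: is_derive_acosh.
Qed.

Definition hex_gram (a b c : R) :=
  cosh a * cosh a + cosh b * cosh b + cosh c * cosh c
  + 2 * cosh a * cosh b * cosh c - 1.

Lemma hex_gram_pos {a b c : R} : 0 < a -> 0 < b -> 0 < c -> 0 < hex_gram a b c.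
Proof.
move=> /cosh_gt1 ha /cosh_gt1 hb /cosh_gt1 hc; rewrite /hex_gram.
have : 1 < cosh a * cosh b by nra.
nra.
Qed.

Section RightAngledHexagon.
Variables a b c : R.
Hypotheses (a0 : 0 < a) (b0 : 0 < b) (c0 : 0 < c).

Let hex_cos := (cosh b * cosh c + cosh a) / (sinh b * sinh c).

Let sinh_bc_pos : 0 < sinh b * sinh c.
Proof. by apply: Rmult_lt_0_compat; apply: sinh_pos. Qed.

Lemma hex_cos_sqr : hex_cos * hex_cos - 1 = hex_gram a b c / (sinh b * sinh c) ^ 2.
Proof.
have := exp_gt1 _ a0; have := exp_gt1 _ b0; have := exp_gt1 _ c0.
rewrite /hex_cos /hex_gram !cosh_exp !sinh_exp => ec eb ea.
by field; split; nra.
Qed.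

Lemma hex_cos_gt1 : 1 < hex_cos.
Proof.
have q0 : 0 < hex_cos.
  apply: Rdiv_lt_0_compat => //.
  by have := cosh_pos a; have := cosh_pos b; have := cosh_pos c; nra.
have : 0 < hex_cos * hex_cos - 1.
  by rewrite hex_cos_sqr; apply: Rdiv_lt_0_compat; [exact: hex_gram_pos | exact: pow_lt].
nra.
Qed.

Lemma hex_sin : sqrt (hex_cos * hex_cos - 1) = sqrt (hex_gram a b c) / (sinh b * sinh c).
Proof.
rewrite hex_cos_sqr sqrt_div ?sqrt_pow2; try lra; last exact: pow_lt.
by have := hex_gram_pos a0 b0 c0; lra.
Qed.

End RightAngledHexagon.

Lemma is_derive_hex_opp (a b c : R -> R) t da db dc :
  is_derive a t da -> is_derive b t db -> is_derive c t dc ->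
  0 < a t -> 0 < b t -> 0 < c t ->
  is_derive (fun t => hex_opp (a t) (b t) (c t)) t
    ((sinh (a t) * da
      - (cosh (c t) + cosh (a t) * cosh (b t)) / sinh (b t) * db
      - (cosh (b t) + cosh (a t) * cosh (c t)) / sinh (c t) * dc)
     / sqrt (hex_gram (a t) (b t) (c t))).
Proof.
move=> ha hb hc a0 b0 c0.
have S0 : sinh (b t) * sinh (c t) <> 0.
  by have := sinh_pos _ b0; have := sinh_pos _ c0; nra.
rewrite /hex_opp; evar_last.
  apply: is_derive_comp; first by apply: is_derive_acosh; exact: hex_cos_gt1.
  apply: is_derive_div => //.
    apply: is_derive_plus; last exact: is_derive_comp (is_derive_cosh _) ha.
    by apply: Derive.is_derive_mult; apply: is_derive_comp (is_derive_cosh _) _;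
      [exact: hb | exact: hc].
  by apply: Derive.is_derive_mult; apply: is_derive_comp (is_derive_sinh _) _;
    [exact: hb | exact: hc].
rewrite hex_sin //; set G := sqrt _.
have G0 : 0 < G by apply: sqrt_lt_R0; exact: hex_gram_pos.
have := exp_gt1 _ a0; have := exp_gt1 _ b0; have := exp_gt1 _ c0.
rewrite /plus /scal /= /mult /= !cosh_exp !sinh_exp => ec eb ea.
by field; repeat split; nra.
Qed.

Lemma hex_gram_rot (L : 'I_3 -> R) k :
  hex_gram (L k) (L (succ3 k)) (L (succ3 (succ3 k))) = hex_gram (L i0) (L i1) (L i2).
Proof. by rewrite /hex_gram; case: (ord3P k) => [|[|]] ->; rewrite !succ3E; ring. Qed.

Section Face.
Variable l : 'I_3 -> R.
Implicit Types (a d : 'I_3 -> R) (k m : 'I_3).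

Definition face_ch a m := exp (a (succ3 m) + a (succ3 (succ3 m))) * cosh (l m / 2).

Definition face_len a m := 2 * acosh (face_ch a m).

Definition face_theta a k :=
  hex_opp (face_len a k) (face_len a (succ3 k)) (face_len a (succ3 (succ3 k))).

Definition face_adm a := forall m, 1 < face_ch a m.

Definition face_jac a k m :=
  let X j := cosh (face_len a j) in
  let G := sqrt (hex_gram (face_len a i0) (face_len a i1) (face_len a i2)) in
  let q := succ3 k in let r := succ3 q in
  if m == k then - (2 / G) * ((X k * X q + X r) / (X q - 1) + (X k * X r + X q) / (X r - 1))
  else if m == q then 2 * (X r - X k - X q - 1) / ((X r - 1) * G)
  else 2 * (X q - X k - X r - 1) / ((X q - 1) * G).

Lemma face_ch_pos a m : 0 < face_ch a m.
Proof. by apply: Rmult_lt_0_compat; [apply: exp_pos | apply: cosh_pos]. Qed.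

Lemma face_len_pos a m : face_adm a -> 0 < face_len a m.
Proof. by move=> /(_ m) /acosh_pos; rewrite /face_len; lra. Qed.

Section Path.
Variables (a : R -> 'I_3 -> R) (t : R) (da : 'I_3 -> R).
Hypothesis a_derive : forall m, is_derive (fun t => a t m) t (da m).

Lemma is_derive_face_ch m :
  is_derive (fun t => face_ch (a t) m) t
    (face_ch (a t) m * (da (succ3 m) + da (succ3 (succ3 m)))).
Proof.
rewrite /face_ch; evar_last.
  apply: Derive.is_derive_mult; last exact: is_derive_const.
  by apply: is_derive_comp (is_derive_exp _) _; apply: is_derive_plus.
by rewrite /scal /plus /zero /= /mult /=; ring.
Qed.

Lemma is_derive_face_len m : face_adm (a t) ->
  is_derive (fun t => face_len (a t) m) t
    (2 * (cosh (face_len (a t) m) + 1) / sinh (face_len (a t) m)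
     * (da (succ3 m) + da (succ3 (succ3 m)))).
Proof.
move=> /(_ m) x1; rewrite /face_len; evar_last.
  apply: is_derive_scal; apply: is_derive_comp; first exact: is_derive_acosh.
  exact: is_derive_face_ch.
rewrite /scal /= /mult /=.
have [] := acosh_exp x1; set x := face_ch _ _; set y := exp _ => y1 ex es.
have eL : exp (2 * acosh x) = y * y by rewrite /y -exp_plus; congr exp; ring.
have yy : 1 < y * y by nra.
rewrite cosh_exp sinh_exp eL es ex.
by field; repeat split; nra.
Qed.

Lemma is_derive_face_theta k : face_adm (a t) ->
  is_derive (fun t => face_theta (a t) k) t
    (\big[Rplus/0]_(m < 3) (face_jac (a t) k m * da m)).
Proof.
move=> adm; rewrite /face_theta; evar_last.
  by apply: is_derive_hex_opp; try apply: is_derive_face_len; try apply: face_len_pos.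
rewrite (big_ord3_rot _ k) /face_jac eqxx; case: (succ3_neq k) => -> -> ->.
rewrite eqxx succ3K3 -(hex_gram_rot _ k); set G := sqrt _.
have G0 : 0 < G by apply: sqrt_lt_R0; apply: hex_gram_pos; apply: face_len_pos.
have [ek eq er] : [/\ 1 < exp (face_len (a t) k), 1 < exp (face_len (a t) (succ3 k))
  & 1 < exp (face_len (a t) (succ3 (succ3 k)))] by split; apply: exp_gt1; apply: face_len_pos.
rewrite !cosh_exp !sinh_exp.
by field; repeat split; nra.
Qed.

Lemma is_derive_face_theta_sum (c : R -> 'I_3 -> R) (dc : 'I_3 -> R) :
  (forall k, is_derive (fun t => c t k) t (dc k)) -> face_adm (a t) ->
  is_derive (fun t => \big[Rplus/0]_(k < 3) (face_theta (a t) k * c t k)) t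
    (\big[Rplus/0]_(k < 3) ((\big[Rplus/0]_(m < 3) (face_jac (a t) k m * da m)) * c t k
                            + face_theta (a t) k * dc k)).
Proof.
move=> hc adm; apply: is_derive_big => k _.
by apply: Derive.is_derive_mult => //; apply: is_derive_face_theta.
Qed.
End Path.

Lemma face_jac_sym a k m : face_jac a k m = face_jac a m k.
Proof.
rewrite /face_jac.
by case: (ord3P k) => [|[|]] ->; case: (ord3P m) => [|[|]] -> //=;
  rewrite !succ3E /=; rewrite /Rdiv; ring.
Qed.

Lemma face_jac_quad_nonpos a d : face_adm a ->
  \big[Rplus/0]_(k < 3) (d k * \big[Rplus/0]_(m < 3) (face_jac a k m * d m)) <= 0.
Proof.
move=> adm; rewrite !big_ord3 /face_jac !succ3E /=.
set G := sqrt _; have G0 : 0 < G.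
  by apply: sqrt_lt_R0; apply: hex_gram_pos; apply: face_len_pos.
have [h0 h1 h2] : [/\ 1 < cosh (face_len a i0), 1 < cosh (face_len a i1)
  & 1 < cosh (face_len a i2)] by split; apply: cosh_gt1; apply: face_len_pos.
move: (cosh (face_len a i0)) (cosh (face_len a i1)) (cosh (face_len a i2)) h0 h1 h2.
move: (d i0) (d i1) (d i2) => d0 d1 d2 X0 X1 X2 h0 h1 h2.
(* the form is [2 / G] times [M], a sum of visibly nonpositive terms *)
set M := - (X1 * d1 * d1 + X2 * d2 * d2 + (X1 + X2) * ((d1 + d2) * (d1 + d2)) / (X0 - 1))
  - (X0 * d0 * d0 + X2 * d2 * d2 + (X0 + X2) * ((d0 + d2) * (d0 + d2)) / (X1 - 1))
  - (X0 * d0 * d0 + X1 * d1 * d1 + (X0 + X1) * ((d0 + d1) * (d0 + d1)) / (X2 - 1))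
  + 2 * (d0 * d1 + d1 * d2 + d0 * d2).
match goal with |- ?q <= 0 => have -> : q = 2 / G * M end.
  by rewrite /M; field; repeat split; lra.
have frac_nonneg (X Y Z e : R) :
    1 < X -> 1 < Y -> 1 < Z -> 0 <= (X + Y) * (e * e) / (Z - 1).
  move=> *; apply: Rdiv_le_0_compat; last lra.
  by apply: Rmult_le_pos; [lra | apply: Rle_0_sqr].
have f0 := frac_nonneg _ _ _ (d1 + d2) h1 h2 h0.
have f1 := frac_nonneg _ _ _ (d0 + d2) h0 h2 h1.
have f2 := frac_nonneg _ _ _ (d0 + d1) h0 h1 h2.
have M0 : M <= 0.
  have g0 : 0 <= (X0 - 1) * (d0 * d0) by apply: Rmult_le_pos; [lra | apply: Rle_0_sqr].
  have g1 : 0 <= (X1 - 1) * (d1 * d1) by apply: Rmult_le_pos; [lra | apply: Rle_0_sqr].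
  have g2 : 0 <= (X2 - 1) * (d2 * d2) by apply: Rmult_le_pos; [lra | apply: Rle_0_sqr].
  have := Rle_0_sqr (d0 - d1); have := Rle_0_sqr (d1 - d2); have := Rle_0_sqr (d0 - d2).
  by rewrite /M /Rsqr; lra.
have : 0 < 2 / G by apply: Rdiv_lt_0_compat; lra.
nra.
Qed.

Lemma face_admE a :
  face_adm a <-> forall m, - ln (cosh (l m / 2)) < a (succ3 m) + a (succ3 (succ3 m)).
Proof.
by split=> h m; have := h m; rewrite /face_ch exp_mul_gt1 //; apply: cosh_pos.
Qed.

Lemma face_adm_convex a b s : face_adm a -> face_adm b -> 0 <= s <= 1 ->
  face_adm (fun m => b m + s * (a m - b m)).
Proof.
rewrite !face_admE => ha hb s01 m; move: (ha m) (hb m); set c := - ln _ => hA hB.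
suff : c < (1 - s) * (b (succ3 m) + b (succ3 (succ3 m)))
            + s * (a (succ3 m) + a (succ3 (succ3 m))) by nra.
move: (a _ + a _) (b _ + b _) hA hB => A B hA hB.
case: (Rle_dec A B) => AB.
  have : 0 <= (1 - s) * (B - A) by apply: Rmult_le_pos; lra.
  nra.
have : 0 <= s * (A - B) by apply: Rmult_le_pos; lra.
nra.
Qed.

Lemma face_adm_scale a s : (forall m, 0 < l m) -> face_adm a -> 0 <= s <= 1 ->
  face_adm (fun m => s * a m).
Proof.
rewrite !face_admE => l0 ha s01 m; move: (ha m).
have : 0 < ln (cosh (l m / 2)).
  by rewrite -ln_1; apply: ln_increasing; [lra | apply: cosh_gt1; have := l0 m; lra].
rewrite -Rmult_plus_distr_l; move: (ln _) (a _ + a _) => L U L0 hU.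
case: (Rle_dec 0 U) => U0.
  have : 0 <= s * U by apply: Rmult_le_pos; lra.
  lra.
have : 0 <= (1 - s) * (- U) by apply: Rmult_le_pos; lra.
nra.
Qed.

Section Limits.
Context {T : Type} {FF : (T -> Prop) -> Prop} {FF_filter : Filter FF}.
Variables (a : T -> 'I_3 -> R) (a0 : 'I_3 -> R).
Hypothesis a_lim : forall m, filterlim (fun z => a z m) FF (locally (a0 m)).
Hypothesis adm0 : face_adm a0.

Lemma lim_face_ch m : filterlim (fun z => face_ch (a z) m) FF (locally (face_ch a0 m)).
Proof.
by apply: lim_mult (lim_const _); apply: lim_continuous (continuous_exp _) _; apply: lim_plus.
Qed.

Lemma face_adm_near : FF (fun z => face_adm (a z)).
Proof.
have near m : FF (fun z => 1 < face_ch (a z) m) by apply: lim_face_ch; apply: open_gt.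
apply: filter_imp (filter_and _ _ (near i0) (filter_and _ _ (near i1) (near i2))).
by move=> z [h0 [h1 h2]] m; case: (ord3P m) => [|[|]] ->.
Qed.

Lemma lim_face_len m : filterlim (fun z => face_len (a z) m) FF (locally (face_len a0 m)).
Proof.
apply: lim_mult (lim_const _) _; apply: lim_continuous (lim_face_ch m).
exact: continuous_acosh.
Qed.

Ltac lim_face := repeat first
  [ apply: lim_face_len | apply: lim_const
  | apply: lim_continuous (continuous_cosh _) _ | apply: lim_continuous (continuous_sinh _) _
  | apply: lim_div | apply: lim_plus | apply: lim_mult | apply: lim_opp ].

Lemma lim_face_theta k : filterlim (fun z => face_theta (a z) k) FF (locally (face_theta a0 k)).
Proof.
have L0 m : 0 < face_len a0 m by apply: face_len_pos.
apply: lim_continuous; first by apply: continuous_acosh; apply: hex_cos_gt1.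
by lim_face; have := sinh_pos _ (L0 (succ3 k)); have := sinh_pos _ (L0 (succ3 (succ3 k))); nra.
Qed.

Lemma lim_face_jac k m : filterlim (fun z => face_jac (a z) k m) FF (locally (face_jac a0 k m)).
Proof.
have X1 j : 1 < cosh (face_len a0 j) by apply: cosh_gt1; apply: face_len_pos.
have G0 : 0 < sqrt (hex_gram (face_len a0 i0) (face_len a0 i1) (face_len a0 i2)).
  by apply: sqrt_lt_R0; apply: hex_gram_pos; apply: face_len_pos.
have lim_G : filterlim (fun z => sqrt (hex_gram (face_len (a z) i0) (face_len (a z) i1)
    (face_len (a z) i2))) FF (locally (sqrt (hex_gram (face_len a0 i0) (face_len a0 i1)
    (face_len a0 i2)))).
  by apply: lim_continuous (continuous_sqrt _) _; rewrite /hex_gram; lim_face.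
rewrite /face_jac; case: (m == k); [|case: (m == succ3 k)];
  lim_face; try exact: lim_G;
  by have := X1 k; have := X1 (succ3 k); have := X1 (succ3 (succ3 k)); nra.
Qed.

End Limits.

Definition face_pot a :=
  RInt (fun s => \big[Rplus/0]_(k < 3) (face_theta (fun m => s * a m) k * a k)) 0 1.

Section Potential.
Hypothesis l_pos : forall m, 0 < l m.
Variables (a v : 'I_3 -> R).

Let ray u t m := t * (a m + u * v m).

Let integrand u t := \big[Rplus/0]_(k < 3) (face_theta (ray u t) k * (a k + u * v k)).

Let integrand_du u t := \big[Rplus/0]_(k < 3)
  ((\big[Rplus/0]_(m < 3) (face_jac (ray u t) k m * (t * v m))) * (a k + u * v k)
   + face_theta (ray u t) k * v k).

Lemma ray_adm {u t : R} : face_adm (fun m => a m + u * v m) -> 0 <= t <= 1 -> face_adm (ray u t).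
Proof. exact: face_adm_scale. Qed.

Lemma is_derive_integrand_u u t : face_adm (ray u t) ->
  is_derive (integrand^~ t) u (integrand_du u t).
Proof.
apply: (is_derive_face_theta_sum (ray^~ t)) => [m|k]; rewrite /ray.
  by auto_derive => //; ring.
by auto_derive => //; ring.
Qed.

Lemma ex_derive_integrand_t u t : face_adm (ray u t) -> ex_derive (integrand u) t.
Proof.
move=> adm; eexists; apply: (is_derive_face_theta_sum (ray u) t) => // [m|k].
  by rewrite /ray; auto_derive => //; ring.
exact: is_derive_const.
Qed.

Lemma is_derive_integrand_primitive u t : face_adm (ray u t) ->
  is_derive (fun t => t * \big[Rplus/0]_(k < 3) (face_theta (ray u t) k * v k)) t
    (integrand_du u t).
Proof.
move=> adm; evar_last.
  apply: Derive.is_derive_mult; first exact: is_derive_id.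
  apply: (is_derive_face_theta_sum (ray u) t (fun m => a m + u * v m) _ (fun _ k => v k)) => //.
    by move=> m; rewrite /ray; auto_derive => //; ring.
  by move=> k; apply: is_derive_const.
(* the two iterated sums agree because the Jacobian is symmetric *)
rewrite /integrand_du !big_ord3 (face_jac_sym _ i1 i0) (face_jac_sym _ i2 i0)
  (face_jac_sym _ i2 i1) /one /zero /=; ring.
Qed.

Section Limits.
Context {T : Type} {FF : (T -> Prop) -> Prop} {FF_filter : Filter FF}.
Context {u t : T -> R} {u0 t0 : R}.
Hypotheses (u_lim : filterlim u FF (locally u0)) (t_lim : filterlim t FF (locally t0)).

Lemma lim_ray m : filterlim (fun z => ray (u z) (t z) m) FF (locally (ray u0 t0 m)).
Proof.
by apply: lim_mult t_lim _; apply: lim_plus (lim_const _) _; apply: lim_mult u_lim (lim_const _).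
Qed.

Lemma lim_integrand_du : face_adm (ray u0 t0) ->
  filterlim (fun z => integrand_du (u z) (t z)) FF (locally (integrand_du u0 t0)).
Proof.
move=> adm; apply: lim_big => k _; apply: lim_plus; last first.
  by apply: lim_mult (lim_const _); apply: lim_face_theta => //; apply: lim_ray.
apply: lim_mult; last by apply: lim_plus (lim_const _) _; apply: lim_mult u_lim (lim_const _).
apply: lim_big => m _; apply: lim_mult; first by apply: lim_face_jac => //; apply: lim_ray.
exact: lim_mult t_lim (lim_const _).
Qed.

End Limits.

Lemma Rmin_Rmax_01 t : Rmin 0 1 <= t <= Rmax 0 1 -> 0 <= t <= 1.
Proof. by rewrite Rmin_left ?Rmax_right; lra. Qed.

Lemma RInt_integrand_du u : face_adm (fun m => a m + u * v m) ->
  RInt (integrand_du u) 0 1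
  = \big[Rplus/0]_(k < 3) (face_theta (fun m => a m + u * v m) k * v k).
Proof.
move=> adm; rewrite (is_RInt_unique _ _ _ _ (is_RInt_derive
  (fun t => t * \big[Rplus/0]_(k < 3) (face_theta (ray u t) k * v k)) _ 0 1 _ _)).
- have -> : ray u 1 = (fun m => a m + u * v m).
    by apply: functional_extensionality => m; rewrite /ray; ring.
  by rewrite /minus /plus /opp /=; ring.
- move=> t /Rmin_Rmax_01 t01.
  by apply: is_derive_integrand_primitive; apply: ray_adm.
- move=> t /Rmin_Rmax_01 t01.
  apply: (@lim_integrand_du _ (locally t) _ (fun=> u) id).
  + exact: lim_const.
  + exact: filterlim_id.
  + exact: ray_adm.
Qed.

Lemma is_derive_face_pot u0 : face_adm (fun m => a m + u0 * v m) ->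
  is_derive (fun u => face_pot (fun m => a m + u * v m)) u0
    (\big[Rplus/0]_(k < 3) (face_theta (fun m => a m + u0 * v m) k * v k)).
Proof.
move=> adm0.
have near_adm : locally u0 (fun u => face_adm (fun m => a m + u * v m)).
  apply: (face_adm_near (fun u m => a m + u * v m)) => // m.
  by apply: lim_plus (lim_const _) _; apply: lim_mult; [exact: filterlim_id | exact: lim_const].
change (is_derive (fun u => RInt (integrand u) 0 1) u0
  (\big[Rplus/0]_(k < 3) (face_theta (fun m => a m + u0 * v m) k * v k))); evar_last.
  apply: is_derive_RInt_param.
  - apply: filter_imp near_adm => u adm t /Rmin_Rmax_01 t01; eexists.
    by apply: is_derive_integrand_u; apply: ray_adm.
  - move=> t /Rmin_Rmax_01 t01; apply: (continuity_2d_pt_ext_loc integrand_du).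
      apply/locally_2d_locally; apply: filter_imp (face_adm_near _ _
        (lim_ray (lim_fst u0 t) (lim_snd u0 t)) (ray_adm adm0 t01)) => z adm; symmetry.
      by apply: is_derive_unique; apply: is_derive_integrand_u.
    apply/continuity_2d_pt_filterlim; apply: (lim_integrand_du (lim_fst _ _) (lim_snd _ _)).
    exact: ray_adm.
  - apply: filter_imp near_adm => u adm; apply: ex_RInt_continuous => t /Rmin_Rmax_01 t01.
    by apply: ex_derive_continuous; apply: ex_derive_integrand_t; apply: ray_adm.
rewrite -(RInt_integrand_du u0 adm0); apply: RInt_ext => t.
rewrite Rmin_left ?Rmax_right; try lra; move=> t01.
by apply: is_derive_unique; apply: is_derive_integrand_u; apply: (ray_adm adm0); lra.
Qed.

End Potential.

Lemma face_pot_concave x y t : (forall m, 0 < l m) -> face_adm x -> face_adm y ->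
  0 <= t <= 1 ->
  t * face_pot x + (1 - t) * face_pot y <= face_pot (fun m => t * x m + (1 - t) * y m).
Proof.
move=> l_pos hx hy t01.
pose seg s m := y m + s * (x m - y m).
have seg_adm s : 0 <= s <= 1 -> face_adm (seg s) by apply: face_adm_convex.
have [-> -> ->] : [/\ face_pot x = face_pot (seg 1), face_pot y = face_pot (seg 0)
    & face_pot (fun m => t * x m + (1 - t) * y m) = face_pot (seg t)].
  by split; congr face_pot; apply: functional_extensionality => m; rewrite /seg; ring.
apply: (concave_of_derive (fun s => face_pot (seg s))
  (fun s => \big[Rplus/0]_(k < 3) (face_theta (seg s) k * (x k - y k)))
  (fun s => \big[Rplus/0]_(k < 3) ((\big[Rplus/0]_(m < 3) (face_jac (seg s) k m * (x m - y m)))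
                                  * (x k - y k) + face_theta (seg s) k * 0))) => // s s01.
- exact: is_derive_face_pot (seg_adm s s01).
- apply: (is_derive_face_theta_sum seg s _ _ (fun _ k => x k - y k)) => [m|k|].
  + by rewrite /seg; auto_derive => //; ring.
  + exact: is_derive_const.
  + exact: seg_adm.
- have := face_jac_quad_nonpos (seg s) (fun m => x m - y m) (seg_adm s s01).
  by rewrite !big_ord3; nra.
Qed.
End Face.

Section Triangulation.
Context {n : nat} {F : finType}.
Variables (bd : F -> 'I_3 -> 'I_n) (l0 : dart F -> R).

Definition face_lengths f m := l0 (f, m).

Definition face_factors (w : 'I_n -> R) f m := w (bd f m).

Definition yamabe_pot w := \big[Rplus/0]_(f : F) face_pot (face_lengths f) (face_factors w f).

Lemma inW_face_adm w f : inW bd l0 w -> face_adm (face_lengths f) (face_factors w f).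
Proof.
move=> hw m; apply: acosh_pos_gt1; first exact: face_ch_pos.
have : 0 < face_len (face_lengths f) (face_factors w f) m := hw (f, m).
by rewrite /face_len; lra.
Qed.

Hypothesis l0_pos : forall d, 0 < l0 d.

Lemma yamabe_pot_concave : concave_on (inW bd l0) yamabe_pot.
Proof.
move=> x y hx hy t t01; rewrite /yamabe_pot !big_Rmult_distrl -big_split.
apply: big_Rle => f _.
by apply: face_pot_concave => //; [move=> m; apply: l0_pos | apply: inW_face_adm ..].
Qed.

Lemma yamabe_pot_gradient : has_gradient_on (inW bd l0) yamabe_pot (Bw bd l0).
Proof.
move=> w hw i.
pose e f m := if bd f m == i then 1 else 0.
have upd_factors s f :
    face_factors (upd w i s) f = (fun m => face_factors w f m + (s - w i) * e f m).
  apply: functional_extensionality => m; rewrite /face_factors /upd /e.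
  by case: eqP => [->|_]; ring.
have factors_wi f : (fun m => face_factors w f m + (w i - w i) * e f m) = face_factors w f.
  by apply: functional_extensionality => m; ring.
apply: (is_derive_ext (fun s => \big[Rplus/0]_(f : F)
    face_pot (face_lengths f) (fun m => face_factors w f m + (s - w i) * e f m))).
  by move=> s; apply: eq_bigr => f _; rewrite upd_factors.
evar_last.
  apply: is_derive_big => f _; apply: (is_derive_comp
    (fun u => face_pot (face_lengths f) (fun m => face_factors w f m + u * e f m))).
    apply: is_derive_face_pot; first by move=> m; apply: l0_pos.
    by rewrite factors_wi; apply: inW_face_adm.
  by auto_derive.
transitivity (\big[Rplus/0]_(f : F) \big[Rplus/0]_(k < 3)
    (if bd f k == i then face_theta (face_lengths f) (face_factors w f) k else 0)).
  apply: eq_bigr => f _; rewrite /scal /= /mult /= Rmult_1_l factors_wi !big_ord3 /e.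
  by case: (bd f i0 == i); case: (bd f i1 == i); case: (bd f i2 == i); rewrite /=; ring.
by rewrite pair_bigA /Bw /Blen [RHS]big_mkcond.
Qed.

Lemma big_dart_partition (B : 'I_n -> R) (G : dart F -> R) :
  \big[Rplus/0]_(i : 'I_n) (B i * \big[Rplus/0]_(x : dart F | bd x.1 x.2 == i) G x)
  = \big[Rplus/0]_(f : F) \big[Rplus/0]_(k < 3) (B (bd f k) * G (f, k)).
Proof.
rewrite pair_bigA (partition_big (fun x : dart F => bd x.1 x.2) predT) //=.
apply: eq_bigr => i _; rewrite big_Rmult_distrl.
by apply: eq_bigr => -[f k] /eqP <-.
Qed.

Definition sumB2_deriv (w dw : 'I_n -> R) :=
  2 * \big[Rplus/0]_(f : F) \big[Rplus/0]_(k < 3) (Bw bd l0 w (bd f k) *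
    \big[Rplus/0]_(m < 3) (face_jac (face_lengths f) (face_factors w f) k m * dw (bd f m))).

Lemma sumB2_deriv_flow_nonpos w : inW bd l0 w -> sumB2_deriv w (Bw bd l0 w) <= 0.
Proof.
move=> hw; rewrite /sumB2_deriv.
suff : \big[Rplus/0]_(f : F) \big[Rplus/0]_(k < 3) (Bw bd l0 w (bd f k) *
    \big[Rplus/0]_(m < 3) (face_jac (face_lengths f) (face_factors w f) k m * Bw bd l0 w (bd f m)))
  <= 0 by lra.
apply: (big_ind (fun x => x <= 0)) => [|x y|f _]; [lra | lra |].
exact: (face_jac_quad_nonpos _ _ (fun m => Bw bd l0 w (bd f m)) (inW_face_adm _ _ hw)).
Qed.

Section Flow.
Variables (w : R -> 'I_n -> R) (t : R) (dw : 'I_n -> R).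
Hypothesis w_derive : forall j, is_derive (fun t => w t j) t (dw j).
Hypothesis wt_adm : inW bd l0 (w t).

Lemma is_derive_Bw i : is_derive (fun t => Bw bd l0 (w t) i) t
  (\big[Rplus/0]_(x : dart F | bd x.1 x.2 == i) \big[Rplus/0]_(m < 3)
     (face_jac (face_lengths x.1) (face_factors (w t) x.1) x.2 m * dw (bd x.1 m))).
Proof.
apply: (is_derive_big _ _ _
  (fun x t => face_theta (face_lengths x.1) (face_factors (w t) x.1) x.2)) => x _.
apply: (is_derive_face_theta _ (fun t => face_factors (w t) x.1)).
  by move=> m; apply: w_derive.
exact: inW_face_adm.
Qed.

Lemma is_derive_sumB2 : is_derive (fun t => sumB2 bd l0 (w t)) t (sumB2_deriv (w t) dw).
Proof.
rewrite /sumB2_deriv -(big_dart_partition (Bw bd l0 (w t)) (fun x => \big[Rplus/0]_(m < 3)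
  (face_jac (face_lengths x.1) (face_factors (w t) x.1) x.2 m * dw (bd x.1 m)))).
rewrite big_Rmult_distrl; apply: (is_derive_big _ _ _
  (fun i t => Bw bd l0 (w t) i * Bw bd l0 (w t) i)) => i _.
evar_last; first by apply: Derive.is_derive_mult; apply: is_derive_Bw.
by rewrite /=; ring.
Qed.

End Flow.

Section FlowLimit.
Context {T : Type} {FF : (T -> Prop) -> Prop} {FF_filter : Filter FF}.
Variables (w : T -> 'I_n -> R) (w0 : 'I_n -> R).
Hypothesis w_lim : forall j, filterlim (fun z => w z j) FF (locally (w0 j)).
Hypothesis w0_adm : inW bd l0 w0.

Lemma lim_sumB2 : filterlim (fun z => sumB2 bd l0 (w z)) FF (locally (sumB2 bd l0 w0)).
Proof.
have lim_B i : filterlim (fun z => Bw bd l0 (w z) i) FF (locally (Bw bd l0 w0 i)).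
  apply: (lim_big _ _ _
    (fun x z => face_theta (face_lengths x.1) (face_factors (w z) x.1) x.2)) => x _.
  apply: (@lim_face_theta _ _ _ _ (fun z => face_factors (w z) x.1) (face_factors w0 x.1)).
    by move=> m; apply: w_lim.
  exact: inW_face_adm.
apply: (lim_big _ _ _ (fun i z => Bw bd l0 (w z) i * Bw bd l0 (w z) i)) => i _.
exact: lim_mult.
Qed.

End FlowLimit.

End Triangulation.

Theorem corollary2 (n : nat) (F : finType) (glue : dart F -> dart F)
    (bd : F -> 'I_3 -> 'I_n) (l0 : dart F -> R) :
  ideal_triangulation glue bd ->
  hyperbolic_metric glue l0 ->
  (exists Phi : ('I_n -> R) -> R,
      concave_on (inW bd l0) Phi /\ has_gradient_on (inW bd l0) Phi (Bw bd l0))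
  /\
  (forall (T : R) (w : R -> 'I_n -> R),
      (0 < T)%R ->
      (forall i, w 0%R i = 0%R) ->
      (forall t, (0 <= t < T)%R -> inW bd l0 (w t)) ->
      (forall i, filterlim (fun s => w s i) (at_right 0%R) (locally (w 0%R i))) ->
      (forall t, (0 < t < T)%R -> forall i,
          is_derive (fun s => w s i) t (Bw bd l0 (w t) i)) ->
      forall s t, (0 <= s)%R -> (s <= t)%R -> (t < T)%R ->
        (sumB2 bd l0 (w t) <= sumB2 bd l0 (w s))%R).
Proof.
move=> _ [l0_pos _]; split.
  exists (yamabe_pot bd l0).
  by split; [apply: yamabe_pot_concave | apply: yamabe_pot_gradient].
move=> T w T0 _ w_adm w_lim w_flow.
apply: (derive_nonpos_le_right_cont _ (fun t => sumB2_deriv bd l0 (w t) (Bw bd l0 (w t)))).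
- by move=> t t0T; apply: is_derive_sumB2; [apply: w_flow | apply: w_adm; lra].
- by move=> t t0T; apply: sumB2_deriv_flow_nonpos; apply: w_adm; lra.
- by apply: lim_sumB2 => //; apply: w_adm; lra.
Qed.
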